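(* The set $\mathsf{NH}$ of nicely hypercyclic vectors is comeager in $\ell^2$.
   Context: $\omega=\{0,1,2,\dots\}$; $\ell^2$ is the Hilbert space of square-summable real sequences indexed by $\omega$ with its norm topology. For nonempty $q\in\mathbb Q^{<\omega}$ and rational $\varepsilon>0$, $U_{q,\varepsilon}=\{x\in\ell^2:\lVert (x\upharpoonright|q|)-q\rVert_\infty<\varepsilon|q|^{-1/2}\text{ and }\lVert x\upharpoonright[|q|,\infty)\rVert_2<\varepsilon\}$ (where $|q|$ is the length of $q$); for $q$ empty, $U_{q,\varepsilon}=\{x:\lVert x\rVert_2<\varepsilon\}$. For $w\in\mathbb R^\omega$, $B_w(x)(i)=w(i)x(i+1)$. A function $w$ on $\omega$ is $n$-nice at $k$ if $w(i)=w(k+i)$ for all $i<n$. $B_w^k$ maps $y$ nicely into $U_{q,\varepsilon}$ if $B_w^k(y)\in U_{q,\varepsilon}$, $w$ is $|q|$-nice at $k$, and $\lVert y\upharpoonright[k+|q|,\infty)\rVert_2<\varepsilon 2^{-k}$. $y\in\ell^2$ is nicely hypercyclic if there is $w\in\{1,2\}^\omega$ such that for every $U_{q,\varepsilon}$ there is $k$ with $B_w^k$ mapping $y$ nicely into $U_{q,\varepsilon}$. *)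

From Stdlib Require Import Reals Lra QArith List.
From Coquelicot Require Import Coquelicot.
Open Scope R_scope.

Definition seqR := nat -> R.

Definition in_l2 (x : seqR) : Prop := ex_series (fun i => (x i) ^ 2).

Definition l2norm (x : seqR) : R := sqrt (Series (fun i => (x i) ^ 2)).

Definition tailnorm (n : nat) (x : seqR) : R :=
  sqrt (Series (fun i => (x (n + i)%nat) ^ 2)).

Definition U (q : list Q) (eps : Q) (x : seqR) : Prop :=
  match q with
  | nil => l2norm x < Q2R eps
  | _ :: _ =>
      (forall i : nat, (i < length q)%nat ->
         Rabs (x i - Q2R (nth i q 0%Q)) < Q2R eps * / sqrt (INR (length q)))
      /\ tailnorm (length q) x < Q2R eps
  end.

Definition Bw (w : seqR) (x : seqR) : seqR := fun i => w i * x (S i).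
Definition Bw_iter (w : seqR) (k : nat) (x : seqR) : seqR := Nat.iter k (Bw w) x.

Definition nice (w : seqR) (n k : nat) : Prop :=
  forall i : nat, (i < n)%nat -> w i = w (k + i)%nat.

Definition maps_nicely (w : seqR) (k : nat) (y : seqR) (q : list Q) (eps : Q) : Prop :=
  U q eps (Bw_iter w k y) /\ nice w (length q) k /\
  tailnorm (k + length q) y < Q2R eps * / 2 ^ k.

Definition nicely_hypercyclic (y : seqR) : Prop :=
  in_l2 y /\
  exists w : seqR, (forall i, w i = 1 \/ w i = 2) /\
    forall (q : list Q) (eps : Q), (0 < eps)%Q ->
      exists k : nat, maps_nicely w k y q eps.

(* topology of ell^2 (norm topology), relative to the set ell^2 *)
Definition l2_open (G : seqR -> Prop) : Prop :=
  forall x, in_l2 x -> G x ->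
    exists d, 0 < d /\ forall y, in_l2 y -> l2norm (fun i => y i - x i) < d -> G y.

Definition l2_dense (G : seqR -> Prop) : Prop :=
  forall x d, in_l2 x -> 0 < d ->
    exists y, in_l2 y /\ G y /\ l2norm (fun i => y i - x i) < d.

Definition comeager_l2 (A : seqR -> Prop) : Prop :=
  exists G : nat -> seqR -> Prop,
    (forall n, l2_open (G n)) /\ (forall n, l2_dense (G n)) /\
    (forall x, in_l2 x -> (forall n, G n x) -> A x).

From Stdlib Require Import Reals Lra Lia QArith Qreals List Cantor.
From Coquelicot Require Import Coquelicot.
Open Scope R_scope.

(* Take the constant weight w = 2, so that B_w^k y = 2^k (y (k + i))_i and w is nice at every k.
   For fixed (q, eps) the vectors y mapped nicely into U_{q,eps} by some B_w^k form an open
   set: for each k the condition is finitely many strict inequalities on coordinates of y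
   and a strict bound on a tail norm of y, all stable under small l2-perturbations
   (Minkowski).  The set is also dense: given x, keep x below index k, put q / 2^k on
   [k, k + |q|) and 0 afterwards; the distance to x is at most |q|_2 / 2^k plus the k-tail
   norm of x, which both vanish as k grows.  Enumerating the countably many pairs (q, eps)
   exhibits NH as containing a countable intersection of dense open sets. *)

Lemma ex_series_zero : ex_series (fun _ : nat => 0).
Proof.
  refine (ex_series_ext (fun n => 0 * (/ 2) ^ n) _ (fun n => Rmult_0_l _) _).
  apply (ex_series_scal_l 0 (fun n => (/ 2) ^ n)), ex_series_geom.
  rewrite Rabs_pos_eq; lra.
Qed.

Lemma Series_zero : Series (fun _ : nat => 0) = 0.
Proof.
  rewrite (Series_ext _ (fun _ => 0 * 0)) by (intro; ring).
  rewrite Series_scal_l. ring.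
Qed.

Lemma ex_series_finite_support (a : nat -> R) (N : nat) :
  (forall i, (N <= i)%nat -> a i = 0) -> ex_series a.
Proof.
  intro Ha. apply (proj2 (ex_series_incr_n a N)).
  refine (ex_series_ext (fun _ => 0) _ _ ex_series_zero).
  intro i. rewrite Ha by lia. reflexivity.
Qed.

Lemma Series_nonneg (a : nat -> R) :
  (forall n, 0 <= a n) -> ex_series a -> 0 <= Series a.
Proof.
  intros Ha Hs. rewrite <- (Rmult_0_l (Series a)), <- Series_scal_l.
  apply Series_le; [intro n; specialize (Ha n); lra | exact Hs].
Qed.

Lemma Series_shift_le (a : nat -> R) (m : nat) :
  (forall n, 0 <= a n) -> ex_series a -> Series (fun i => a (m + i)%nat) <= Series a.
Proof.
  intros Ha Hs. destruct m as [|m]; [right; reflexivity |].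
  rewrite (Series_incr_n a (S m)) by (lia || exact Hs).
  pose proof (cond_pos_sum a m Ha). simpl Init.Nat.pred. lra.
Qed.

Lemma Series_term_le (a : nat -> R) (j : nat) :
  (forall n, 0 <= a n) -> ex_series a -> a j <= Series a.
Proof.
  intros Ha Hs. eapply Rle_trans; [| exact (Series_shift_le a j Ha Hs)].
  pose proof (proj1 (ex_series_incr_n a j) Hs) as Hj.
  rewrite (Series_incr_1 _ Hj), Nat.add_0_r.
  enough (0 <= Series (fun k => a (j + S k)%nat)) by lra.
  apply Series_nonneg; [intro; apply Ha | exact (proj1 (ex_series_incr_1 _) Hj)].
Qed.

Lemma sq_add_le (u v d : R) : 0 < d -> (u + v) ^ 2 <= (1 + d) * u ^ 2 + (1 + / d) * v ^ 2.
Proof.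
  intro Hd.
  assert (Hgap : (1 + d) * u ^ 2 + (1 + / d) * v ^ 2 - (u + v) ^ 2 = (d * u - v) ^ 2 * / d)
    by (field; lra).
  pose proof (pow2_ge_0 (d * u - v)). pose proof (Rinv_0_lt_compat d Hd). nra.
Qed.

Lemma sq_nonneg (u : seqR) (i : nat) : 0 <= u i ^ 2.
Proof. apply pow2_ge_0. Qed.

Lemma in_l2_add (u v : seqR) : in_l2 u -> in_l2 v -> in_l2 (fun i => u i + v i).
Proof.
  intros Hu Hv.
  apply (@ex_series_le R_AbsRing R_CompleteNormedModule _ (fun i => 2 * u i ^ 2 + 2 * v i ^ 2)).
  - intro i. change (norm ((u i + v i) ^ 2)) with (Rabs ((u i + v i) ^ 2)).
    rewrite Rabs_pos_eq by apply pow2_ge_0.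
    pose proof (sq_add_le (u i) (v i) 1 Rlt_0_1) as Hsq. rewrite Rinv_1 in Hsq. lra.
  - exact (ex_series_plus _ _ (ex_series_scal_l 2 _ Hu) (ex_series_scal_l 2 _ Hv)).
Qed.

Lemma in_l2_scal (c : R) (u : seqR) : in_l2 u -> in_l2 (fun i => c * u i).
Proof.
  intro Hu. refine (ex_series_ext (fun i => c ^ 2 * u i ^ 2) _ _ (ex_series_scal_l _ _ Hu)).
  intro; simpl; ring.
Qed.

Lemma in_l2_opp (u : seqR) : in_l2 u -> in_l2 (fun i => - u i).
Proof.
  intro Hu. refine (ex_series_ext _ _ _ (in_l2_scal (-1) u Hu)). intro; simpl; ring.
Qed.

Lemma in_l2_sub (u v : seqR) : in_l2 u -> in_l2 v -> in_l2 (fun i => u i - v i).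
Proof. intros Hu Hv. exact (in_l2_add u _ Hu (in_l2_opp v Hv)). Qed.

Lemma in_l2_shift (m : nat) (u : seqR) : in_l2 u -> in_l2 (fun i => u (m + i)%nat).
Proof. exact (proj1 (ex_series_incr_n _ m)). Qed.

Lemma l2norm_ext (u v : seqR) : (forall i, u i = v i) -> l2norm u = l2norm v.
Proof. intro Huv. unfold l2norm. f_equal. apply Series_ext. intro i. rewrite Huv. reflexivity. Qed.

Lemma l2norm_sq (u : seqR) : in_l2 u -> l2norm u ^ 2 = Series (fun i => u i ^ 2).
Proof. intro Hu. apply pow2_sqrt, Series_nonneg; [apply sq_nonneg | exact Hu]. Qed.

Lemma l2norm_scal (c : R) (u : seqR) : l2norm (fun i => c * u i) = Rabs c * l2norm u.
Proof.
  unfold l2norm.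
  rewrite (Series_ext _ (fun i => c ^ 2 * u i ^ 2)) by (intro; ring).
  rewrite Series_scal_l, sqrt_mult_alt by apply pow2_ge_0.
  rewrite <- pow2_abs, sqrt_pow2 by apply Rabs_pos. reflexivity.
Qed.

Lemma l2norm_opp (u : seqR) : l2norm (fun i => - u i) = l2norm u.
Proof.
  rewrite (l2norm_ext _ (fun i => -1 * u i)) by (intro; ring).
  rewrite l2norm_scal, Rabs_left by lra. ring.
Qed.

(* The weight [d] of [sq_add_le] is taken close to [l2norm v / l2norm u]; the slack [e]
   keeps it well defined when [l2norm u = 0]. *)
Lemma l2norm_add_le (u v : seqR) :
  in_l2 u -> in_l2 v -> l2norm (fun i => u i + v i) <= l2norm u + l2norm v.
Proof.
  intros Hu Hv.
  set (a := l2norm u). set (b := l2norm v).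
  assert (Ha : 0 <= a) by apply sqrt_pos. assert (Hb : 0 <= b) by apply sqrt_pos.
  apply Rle_plus_epsilon. intros e He.
  set (d := (b + e) / (a + e)).
  assert (Hd : 0 < d) by (apply Rdiv_lt_0_compat; lra).
  assert (Hda : d * (a + e) = b + e) by (unfold d; field; lra).
  assert (Hdb : / d * (b + e) = a + e) by (unfold d; field; lra).
  assert (Hsum : Series (fun i => (u i + v i) ^ 2) <= (1 + d) * a ^ 2 + (1 + / d) * b ^ 2).
  { unfold a, b. rewrite !l2norm_sq by assumption.
    pose proof (ex_series_scal_l (1 + d) _ Hu) as Hu'.
    pose proof (ex_series_scal_l (1 + / d) _ Hv) as Hv'.
    rewrite <- !Series_scal_l, <- Series_plus by assumption.
    apply Series_le; [| exact (ex_series_plus _ _ Hu' Hv')].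
    intro i. split; [apply pow2_ge_0 | exact (sq_add_le _ _ _ Hd)]. }
  assert (Hda' : d * a <= b + e) by nra.
  assert (Hdb' : / d * b <= a + e) by (pose proof (Rinv_0_lt_compat d Hd); nra).
  assert (Ha2 : d * a ^ 2 <= a * (b + e)) by nra.
  assert (Hb2 : / d * b ^ 2 <= b * (a + e)) by nra.
  unfold l2norm. rewrite <- (sqrt_pow2 (a + b + e)) by lra.
  apply sqrt_le_1_alt. nra.
Qed.

Lemma l2norm_sub_le (u v : seqR) :
  in_l2 u -> in_l2 v -> l2norm (fun i => u i - v i) <= l2norm u + l2norm v.
Proof.
  intros Hu Hv. rewrite <- (l2norm_opp v).
  exact (l2norm_add_le u _ Hu (in_l2_opp v Hv)).
Qed.

Lemma tailnorm_le_l2norm (m : nat) (u : seqR) : in_l2 u -> tailnorm m u <= l2norm u.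
Proof.
  intro Hu. apply sqrt_le_1_alt. exact (Series_shift_le _ m (sq_nonneg u) Hu).
Qed.

Lemma coord_le_l2norm (j : nat) (u : seqR) : in_l2 u -> Rabs (u j) <= l2norm u.
Proof.
  intro Hu. rewrite <- (sqrt_pow2 (Rabs (u j))) by apply Rabs_pos.
  apply sqrt_le_1_alt. rewrite pow2_abs. exact (Series_term_le _ j (sq_nonneg u) Hu).
Qed.

Lemma l2norm_zero_prefix (k : nat) (u : seqR) :
  (forall i, (i < k)%nat -> u i = 0) -> l2norm u = tailnorm k u.
Proof.
  intro Hu. unfold l2norm, tailnorm. f_equal.
  apply (Series_incr_n_aux (fun i => u i ^ 2)). intros i Hi. rewrite Hu by exact Hi. ring.
Qed.

Lemma tailnorm_le_add (m : nat) (x y : seqR) :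
  in_l2 x -> in_l2 y -> tailnorm m y <= tailnorm m x + l2norm (fun i => y i - x i).
Proof.
  intros Hx Hy.
  change (tailnorm m y) with (l2norm (fun i => y (m + i)%nat)).
  rewrite (l2norm_ext _ (fun i => x (m + i)%nat + (y (m + i)%nat - x (m + i)%nat)))
    by (intro; ring).
  eapply Rle_trans; [apply l2norm_add_le |].
  - exact (in_l2_shift m x Hx).
  - exact (in_l2_shift m _ (in_l2_sub y x Hy Hx)).
  - apply Rplus_le_compat_l.
    exact (tailnorm_le_l2norm m _ (in_l2_sub y x Hy Hx)).
Qed.

Lemma tailnorm_vanishes (u : seqR) (e : R) :
  in_l2 u -> 0 < e -> exists N, forall k, (N <= k)%nat -> tailnorm k u < e.
Proof.
  intros Hu He.
  pose proof (proj1 (is_series_Reals _ _) (Series_correct _ Hu)) as Hlim.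
  destruct (Hlim (e ^ 2)) as [N HN]; [apply pow_lt; lra |].
  exists (S N). intros k Hk.
  rewrite <- (sqrt_pow2 e) by lra. apply sqrt_lt_1_alt. split.
  - apply Series_nonneg; [intro; apply pow2_ge_0 | exact (in_l2_shift k u Hu)].
  - specialize (HN (Init.Nat.pred k) ltac:(lia)). unfold Rdist in HN.
    rewrite (Series_incr_n _ k) in HN by (lia || exact Hu).
    apply Rabs_def2 in HN. lra.
Qed.

Lemma l2_open_ext (P Q : seqR -> Prop) :
  (forall y, in_l2 y -> P y <-> Q y) -> l2_open P -> l2_open Q.
Proof.
  intros HPQ HP x Hx Qx.
  destruct (HP x Hx (proj2 (HPQ x Hx) Qx)) as [d [Hd Hball]].
  exists d. split; [exact Hd |]. intros y Hy Hxy. apply HPQ; auto.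
Qed.

Lemma l2_open_and (P Q : seqR -> Prop) :
  l2_open P -> l2_open Q -> l2_open (fun y => P y /\ Q y).
Proof.
  intros HP HQ x Hx [Px Qx].
  destruct (HP x Hx Px) as [d1 [Hd1 H1]]. destruct (HQ x Hx Qx) as [d2 [Hd2 H2]].
  exists (Rmin d1 d2). split; [apply Rmin_pos; assumption |].
  intros y Hy Hxy. pose proof (Rmin_l d1 d2). pose proof (Rmin_r d1 d2).
  split; [apply H1 | apply H2]; auto; lra.
Qed.

Lemma l2_open_forall_lt (n : nat) (P : nat -> seqR -> Prop) :
  (forall i, (i < n)%nat -> l2_open (P i)) ->
  l2_open (fun y => forall i, (i < n)%nat -> P i y).
Proof.
  induction n as [|n IH]; intro HP.
  - intros x _ _. exists 1. split; [lra |]. intros y _ _ i Hi. lia.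
  - apply (l2_open_ext (fun y => (forall i, (i < n)%nat -> P i y) /\ P n y)).
    + intros y _. split.
      * intros [Hlt Hn] i Hi. destruct (Nat.eq_dec i n) as [-> | Hne]; auto. apply Hlt. lia.
      * intro Hle. split; auto.
    + apply l2_open_and; auto.
Qed.

Lemma l2_open_exists (P : nat -> seqR -> Prop) :
  (forall k, l2_open (P k)) -> l2_open (fun y => exists k, P k y).
Proof.
  intros HP x Hx [k Pkx]. destruct (HP k x Hx Pkx) as [d [Hd Hball]].
  exists d. split; [exact Hd |]. intros y Hy Hxy. exists k. auto.
Qed.

Lemma l2_open_coord (j : nat) (c r s : R) : l2_open (fun y => Rabs (c * y j - r) < s).
Proof.
  intros x Hx Hxs.
  set (g := s - Rabs (c * x j - r)). pose proof (Rabs_pos c).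
  exists (g / (Rabs c + 1)). split; [apply Rdiv_lt_0_compat; unfold g; lra |].
  intros y Hy Hxy.
  pose proof (coord_le_l2norm j _ (in_l2_sub y x Hy Hx)) as Hj. simpl in Hj.
  assert (Hstep : Rabs (c * y j - r) <= Rabs (c * x j - r) + Rabs c * Rabs (y j - x j)).
  { rewrite <- Rabs_mult.
    replace (c * y j - r) with ((c * x j - r) + c * (y j - x j)) by ring.
    apply Rabs_triang. }
  assert (Hg : g / (Rabs c + 1) * (Rabs c + 1) = g) by (field; lra).
  assert (Hcj : Rabs c * Rabs (y j - x j) <= Rabs c * (g / (Rabs c + 1)))
    by (apply Rmult_le_compat_l; lra).
  assert (0 < g / (Rabs c + 1)) by (apply Rdiv_lt_0_compat; unfold g; lra).
  unfold g in *. nra.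
Qed.

Lemma l2_open_tailnorm_lt (m : nat) (t : R) : l2_open (fun y => tailnorm m y < t).
Proof.
  intros x Hx Hxt. exists (t - tailnorm m x). split; [lra |].
  intros y Hy Hxy. pose proof (tailnorm_le_add m x y Hx Hy). lra.
Qed.

Lemma Bw_iter_const (c : R) (k : nat) (y : seqR) (i : nat) :
  Bw_iter (fun _ => c) k y i = c ^ k * y (k + i)%nat.
Proof.
  revert i; induction k as [|k IH]; intro i; [simpl; ring |].
  change (Bw_iter (fun _ => c) (S k) y i) with (c * Bw_iter (fun _ => c) k y (S i)).
  rewrite IH, Nat.add_succ_r. simpl. ring.
Qed.

Lemma tailnorm_Bw_iter_const (c : R) (k m : nat) (y : seqR) :
  0 <= c -> tailnorm m (Bw_iter (fun _ => c) k y) = c ^ k * tailnorm (k + m) y.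
Proof.
  intro Hc. change (tailnorm m (Bw_iter (fun _ => c) k y))
    with (l2norm (fun i => Bw_iter (fun _ => c) k y (m + i)%nat)).
  rewrite (l2norm_ext _ (fun i => c ^ k * y (k + m + i)%nat))
    by (intro i; rewrite Bw_iter_const, Nat.add_assoc; reflexivity).
  rewrite l2norm_scal, Rabs_pos_eq by (apply pow_le; exact Hc). reflexivity.
Qed.

Lemma U_iff (q : list Q) (eps : Q) (z : seqR) :
  U q eps z <->
  (forall i, (i < length q)%nat ->
     Rabs (z i - Q2R (nth i q 0%Q)) < Q2R eps * / sqrt (INR (length q))) /\
  tailnorm (length q) z < Q2R eps.
Proof.
  (* for [q = nil], [l2norm z] and [tailnorm 0 z] are convertible *)
  destruct q as [|a q]; [| reflexivity]. simpl. split.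
  - intro Hz. split; [intros i Hi; lia | exact Hz].
  - intros [_ Hz]. exact Hz.
Qed.

(* For the weight [w = 2] niceness is automatic, and the tail condition of [U q eps]
   is exactly the tail condition on [y] demanded by [maps_nicely]. *)
Lemma maps_nicely_2_iff (k : nat) (y : seqR) (q : list Q) (eps : Q) :
  maps_nicely (fun _ => 2) k y q eps <->
  (forall i, (i < length q)%nat ->
     Rabs (2 ^ k * y (k + i)%nat - Q2R (nth i q 0%Q)) < Q2R eps * / sqrt (INR (length q))) /\
  tailnorm (k + length q) y < Q2R eps * / 2 ^ k.
Proof.
  unfold maps_nicely. rewrite U_iff, tailnorm_Bw_iter_const by lra.
  assert (H2k : 0 < 2 ^ k) by (apply pow_lt; lra).
  assert (Heps : 2 ^ k * (Q2R eps * / 2 ^ k) = Q2R eps) by (field; lra).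
  setoid_rewrite Bw_iter_const.
  split.
  - intros [[Hcoord _] [_ Htl]]. split; assumption.
  - intros [Hcoord Htl]. split; [split |]; [exact Hcoord | | split; [| exact Htl]].
    + rewrite <- Heps. apply Rmult_lt_compat_l; assumption.
    + intros i _. reflexivity.
Qed.

Lemma maps_nicely_2_open (k : nat) (q : list Q) (eps : Q) :
  l2_open (fun y => maps_nicely (fun _ => 2) k y q eps).
Proof.
  eapply l2_open_ext; [intros y _; symmetry; apply maps_nicely_2_iff |].
  apply l2_open_and; [| apply l2_open_tailnorm_lt].
  apply l2_open_forall_lt. intros i _. apply l2_open_coord.
Qed.

Definition Qseq (q : list Q) : seqR := fun i => Q2R (nth i q 0%Q).

Lemma Qseq_overflow (q : list Q) (i : nat) : (length q <= i)%nat -> Qseq q i = 0.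
Proof. intro Hi. unfold Qseq. rewrite nth_overflow by exact Hi. unfold Q2R. simpl. ring. Qed.

Lemma in_l2_Qseq (q : list Q) : in_l2 (Qseq q).
Proof.
  apply (ex_series_finite_support _ (length q)). intros i Hi.
  rewrite Qseq_overflow by exact Hi. ring.
Qed.

(* The block [q] is scaled by [2^-k] so that [B^k] carries it back onto [q]. *)
Definition splice (k : nat) (x : seqR) (q : list Q) : seqR :=
  fun i => if (i <? k)%nat then x i else / 2 ^ k * Qseq q (i - k)%nat.

Lemma splice_lt (k : nat) (x : seqR) (q : list Q) (i : nat) :
  (i < k)%nat -> splice k x q i = x i.
Proof. intro Hi. unfold splice. destruct (Nat.ltb_spec i k); [reflexivity | lia]. Qed.

Lemma splice_add (k : nat) (x : seqR) (q : list Q) (i : nat) :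
  splice k x q (k + i)%nat = / 2 ^ k * Qseq q i.
Proof.
  unfold splice. destruct (Nat.ltb_spec (k + i) k); [lia |].
  replace (k + i - k)%nat with i by lia. reflexivity.
Qed.

Lemma splice_overflow (k : nat) (x : seqR) (q : list Q) (i : nat) :
  (k + length q <= i)%nat -> splice k x q i = 0.
Proof.
  intro Hi. replace i with (k + (i - k))%nat by lia.
  rewrite splice_add, Qseq_overflow by lia. ring.
Qed.

Lemma in_l2_splice (k : nat) (x : seqR) (q : list Q) : in_l2 (splice k x q).
Proof.
  apply (ex_series_finite_support _ (k + length q)). intros i Hi.
  rewrite splice_overflow by exact Hi. ring.
Qed.

Lemma maps_nicely_splice (k : nat) (x : seqR) (q : list Q) (eps : Q) :
  (0 < eps)%Q -> maps_nicely (fun _ => 2) k (splice k x q) q eps.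
Proof.
  intro Heps. apply Qlt_Rlt in Heps. unfold Q2R at 1 in Heps. simpl in Heps.
  assert (H2k : 0 < 2 ^ k) by (apply pow_lt; lra).
  apply maps_nicely_2_iff. split.
  - intros i Hi. rewrite splice_add.
    replace (2 ^ k * (/ 2 ^ k * Qseq q i) - Q2R (nth i q 0%Q)) with 0
      by (unfold Qseq; field; lra).
    rewrite Rabs_R0. apply Rmult_lt_0_compat; [lra |].
    apply Rinv_0_lt_compat, sqrt_lt_R0, lt_0_INR. lia.
  - assert (Htail : tailnorm (k + length q) (splice k x q) = 0).
    { unfold tailnorm. rewrite <- sqrt_0. f_equal.
      rewrite <- Series_zero. apply Series_ext. intro i.
      rewrite splice_overflow by lia. ring. }
    rewrite Htail. apply Rmult_lt_0_compat; [lra | apply Rinv_0_lt_compat; exact H2k].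
Qed.

Lemma l2norm_splice_sub_le (k : nat) (x : seqR) (q : list Q) :
  in_l2 x ->
  l2norm (fun i => splice k x q i - x i) <= / 2 ^ k * l2norm (Qseq q) + tailnorm k x.
Proof.
  intro Hx.
  rewrite (l2norm_zero_prefix k) by (intros i Hi; rewrite splice_lt by exact Hi; ring).
  change (tailnorm k (fun i => splice k x q i - x i))
    with (l2norm (fun i => splice k x q (k + i)%nat - x (k + i)%nat)).
  rewrite (l2norm_ext _ (fun i => / 2 ^ k * Qseq q i - x (k + i)%nat))
    by (intro i; rewrite splice_add; reflexivity).
  eapply Rle_trans;
    [apply l2norm_sub_le; [apply in_l2_scal, in_l2_Qseq | exact (in_l2_shift k x Hx)] |].
  rewrite l2norm_scal, Rabs_pos_eq by (left; apply Rinv_0_lt_compat, pow_lt; lra).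
  right. reflexivity.
Qed.

Lemma maps_nicely_2_dense (q : list Q) (eps : Q) :
  (0 < eps)%Q -> l2_dense (fun y => exists k, maps_nicely (fun _ => 2) k y q eps).
Proof.
  intros Heps x d Hx Hd.
  set (L := l2norm (Qseq q)). assert (HL : 0 <= L) by apply sqrt_pos.
  destruct (tailnorm_vanishes x (d / 2) Hx) as [N1 HN1]; [lra |].
  destruct (Pow_x_infinity 2 ltac:(rewrite Rabs_pos_eq; lra) (2 * L / d)) as [N2 HN2].
  set (k := Nat.max N1 N2).
  specialize (HN1 k (Nat.le_max_l _ _)). specialize (HN2 k (Nat.le_max_r _ _)).
  assert (H2k : 0 < 2 ^ k) by (apply pow_lt; lra).
  rewrite Rabs_pos_eq in HN2 by lra.
  assert (HLk : / 2 ^ k * L <= d / 2).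
  { apply (Rmult_le_reg_l (2 ^ k)); [exact H2k |].
    rewrite <- Rmult_assoc, Rinv_r, Rmult_1_l by lra.
    assert (Hdd : 2 * L / d * d = 2 * L) by (field; lra). nra. }
  exists (splice k x q). split; [apply in_l2_splice |]. split.
  - exists k. apply maps_nicely_splice, Heps.
  - pose proof (l2norm_splice_sub_le k x q Hx). unfold L in HLk. lra.
Qed.

Definition decode2 {A B C : Type} (h : A -> B -> C) (f : nat -> A) (g : nat -> B) (n : nat) : C :=
  h (f (fst (Cantor.of_nat n))) (g (snd (Cantor.of_nat n))).

Lemma decode2_hits {A B C : Type} (h : A -> B -> C) (f : nat -> A) (g : nat -> B) (a : A) (b : B) :
  (exists i, f i = a) -> (exists j, g j = b) -> exists n, decode2 h f g n = h a b.
Proof.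
  intros [i <-] [j <-]. exists (Cantor.to_nat (i, j)).
  unfold decode2. rewrite Cantor.cancel_of_to. reflexivity.
Qed.

Lemma of_succ_nat_hits (p : positive) : exists n, Pos.of_succ_nat n = p.
Proof. exists (Init.Nat.pred (Pos.to_nat p)). apply SuccNat2Pos.inv. lia. Qed.

Definition Z_of_code : nat -> Z := decode2 (fun a b => Z.of_nat a - Z.of_nat b)%Z Datatypes.id Datatypes.id.

Lemma Z_of_code_hits (z : Z) : exists n, Z_of_code n = z.
Proof.
  destruct (decode2_hits (fun a b => Z.of_nat a - Z.of_nat b)%Z Datatypes.id Datatypes.id (Z.to_nat z) (Z.to_nat (- z)))
    as [n Hn]; [eexists; reflexivity | eexists; reflexivity |].
  exists n. unfold Z_of_code. rewrite Hn. lia.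
Qed.

Definition Q_of_code : nat -> Q := decode2 Qmake Z_of_code Pos.of_succ_nat.

Lemma Q_of_code_hits (r : Q) : exists n, Q_of_code n = r.
Proof.
  destruct r as [z p].
  exact (decode2_hits Qmake _ _ z p (Z_of_code_hits z) (of_succ_nat_hits p)).
Qed.

Definition Qpos_of_code : nat -> Q :=
  decode2 (fun a b => Qmake (Zpos a) b) Pos.of_succ_nat Pos.of_succ_nat.

Lemma Qpos_of_code_pos (n : nat) : (0 < Qpos_of_code n)%Q.
Proof. unfold Qlt. simpl. lia. Qed.

Lemma Qpos_of_code_hits (r : Q) : (0 < r)%Q -> exists n, Qpos_of_code n = r.
Proof.
  destruct r as [[|a|a] b]; unfold Qlt; simpl; intro Hr; try lia.
  exact (decode2_hits _ _ _ a b (of_succ_nat_hits a) (of_succ_nat_hits b)).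
Qed.

Fixpoint list_of_code_len {A : Type} (f : nat -> A) (len : nat) : nat -> list A :=
  match len with
  | O => fun _ => nil
  | S len => decode2 cons f (list_of_code_len f len)
  end.

Definition list_of_code {A : Type} (f : nat -> A) : nat -> list A :=
  decode2 (list_of_code_len f) Datatypes.id Datatypes.id.

Lemma list_of_code_hits {A : Type} (f : nat -> A) (s : list A) :
  (forall a, exists i, f i = a) -> exists n, list_of_code f n = s.
Proof.
  intro Hf.
  assert (Hlen : exists m, list_of_code_len f (length s) m = s).
  { induction s as [|a s IH]; [exists O; reflexivity |].
    exact (decode2_hits cons f _ a s (Hf a) IH). }
  destruct Hlen as [m Hm].
  destruct (decode2_hits (list_of_code_len f) Datatypes.id Datatypes.id (length s) m)
    as [n Hn]; [eexists; reflexivity | eexists; reflexivity |].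
  exists n. unfold list_of_code. rewrite Hn. exact Hm.
Qed.

Definition target_of_code : nat -> list Q * Q := decode2 pair (list_of_code Q_of_code) Qpos_of_code.

Theorem lemma9 : comeager_l2 nicely_hypercyclic.
Proof.
  exists (fun n y => exists k, maps_nicely (fun _ => 2) k y
                        (fst (target_of_code n)) (snd (target_of_code n))).
  split; [| split].
  - intro n. apply l2_open_exists. intro k. apply maps_nicely_2_open.
  - intro n. apply maps_nicely_2_dense. apply Qpos_of_code_pos.
  - intros y Hy HG. split; [exact Hy |].
    exists (fun _ => 2). split; [intro; right; reflexivity |].
    intros q eps Heps.
    destruct (decode2_hits pair _ _ q eps (list_of_code_hits _ q Q_of_code_hits)
                (Qpos_of_code_hits eps Heps)) as [n Hn].
    specialize (HG n). unfold target_of_code in HG. rewrite Hn in HG. exact HG.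
Qed.
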